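(* For every set $I\subseteq[n]$ of $k$ distinct participants, the secret $\mathbf s$ is uniquely determined by the shares $(t_i)_{i\in I}$: there is a function $g_I$ such that $g_I((t_i)_{i\in I})=\mathbf s$ for all values of $\mathbf s$ and of the random entries of $M$.
   Context: Fix integers $n\ge k\ge 2$ and $d\ge k$, and a finite field $\mathbb{F}_q$ with $q>n$ (the integers $1,\dots,n$ are regarded as distinct elements of $\mathbb{F}_q$). For $i\in[n]=\{1,\dots,n\}$ let $\psi_i=(1,i,i^2,\dots,i^{d-1})^T\in\mathbb{F}_q^d$. The secret is $\mathbf s=(s_1,\dots,s_{d-k+1})\in\mathbb{F}_q^{d-k+1}$; write $s_A=s_{d-k+1}\in\mathbb{F}_q$ and $s_B=(s_1,\dots,s_{d-k})^T\in\mathbb{F}_q^{d-k}$. The dealer forms the symmetric $d\times d$ matrix $$M=\begin{pmatrix} s_A & r_a^T & s_B^T\\ r_a & R_b & R_c^T\\ s_B & R_c & 0\end{pmatrix}$$ with row/column blocks of sizes $1,\,k-1,\,d-k$, where $r_a\in\mathbb{F}_q^{k-1}$, $R_b$ is a symmetric $(k-1)\times(k-1)$ matrix, $R_c$ is a $(d-k)\times(k-1)$ matrix, and $0$ is the $(d-k)\times(d-k)$ zero matrix; the $R=(k-1)d-\binom{k-1}{2}$ free entries of $r_a,R_b,R_c$ (for $R_b$: the entries on and above the diagonal) are independent, uniform on $\mathbb{F}_q$, and independent of $\mathbf s$. The share of participant $j$ is $t_j^T=\psi_j^T N$, where $N=\begin{pmatrix} s_A & s_B^T\\ r_a & R_c^T\\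 s_B & 0\end{pmatrix}$ is the $d\times(d-k+1)$ matrix formed by the first column and the last $d-k$ columns of $M$. *)

From HB Require Import structures.
From mathcomp Require Import all_boot all_order all_algebra all_field.
Set Implicit Arguments. Unset Strict Implicit. Unset Printing Implicit Defensive.
Import GRing.Theory.
Local Open Scope ring_scope.

Section Scheme.
Variables (F : fieldType) (k d : nat).

(* total accessor of a matrix entry at natural-number indices
   (only ever used with in-range indices below) *)
Definition mget m p (A : 'M[F]_(m, p)) (i j : nat) : F :=
  match insub i, insub j with
  | Some i', Some j' => A i' j'
  | _, _ => 0
  end.

Definition psi (x : F) : 'rV[F]_d := \row_(l < d) x ^+ l.

(* secret s = (s_1, ..., s_(d-k+1)), stored 0-indexed *)
Definition sA (s : 'rV[F]_(d - k + 1)) : F := mget s 0 (d - k).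
Definition sB (s : 'rV[F]_(d - k + 1)) (l : nat) : F := mget s 0 l.

(* The symmetric d x d dealer matrix M, with blocks of sizes 1, k-1, d-k.
   ra : 'cV_(k-1), Rb : 'M_(k-1), Rc : 'M_(d-k, k-1). *)
Definition dealerM (s : 'rV[F]_(d - k + 1)) (ra : 'cV[F]_(k.-1))
  (Rb : 'M[F]_(k.-1)) (Rc : 'M[F]_(d - k, k.-1)) : 'M[F]_d :=
  \matrix_(i < d, j < d)
    if (i == 0%N :> nat) then
      (if (j == 0%N :> nat) then sA s
       else if (j < k)%N then mget ra j.-1 0
       else sB s (j - k))
    else if (i < k)%N then
      (if (j == 0%N :> nat) then mget ra i.-1 0
       else if (j < k)%N then mget Rb i.-1 j.-1
       else mget Rc (j - k) i.-1)
    else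
      (if (j == 0%N :> nat) then sB s (i - k)
       else if (j < k)%N then mget Rc (i - k) j.-1
       else 0).

(* N = first column and last d-k columns of M *)
Definition dealerN (s : 'rV[F]_(d - k + 1)) ra Rb Rc : 'M[F]_(d, d - k + 1) :=
  \matrix_(i < d, c < d - k + 1)
    mget (dealerM s ra Rb Rc) i (if c == 0%N :> nat then 0%N else (k + c - 1)%N).

Definition share (x : F) s ra Rb Rc : 'rV[F]_(d - k + 1) :=
  psi x *m dealerN s ra Rb Rc.

End Scheme.

From HB Require Import structures.
From mathcomp Require Import all_boot all_order all_algebra all_field.
From mathcomp Require Import zify.
Import GRing.Theory.
Local Open Scope ring_scope.

(* Column c of the share matrix N is the coefficient vector of a
   polynomial P_c of degree < d, and entry c of the share of the participant
   with evaluation point x is P_c(x).  Rows k, ..., d-1 of N are known in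
   advance up to the secret: they vanish in the last d-k columns and equal
   s_B in the first one.  Hence two polynomials P_c, P'_c coming from dealer
   matrices with the same s_B (resp. any dealer matrices, for c >= 1) agree
   in all coefficients of index >= k; if they also agree at k distinct points
   they are equal (a nonzero polynomial of degree < k has < k roots).  Their
   constant terms, which are the secret entries, then coincide.  Doing this
   first for the columns c >= 1 (giving s_B) and then for column 0 (giving
   s_A) shows that k shares determine s.  Finally, since all data range over
   a finite type, a map that determines s can be inverted by choice
   ([pick]), which yields the decoding function g_I. *)

Lemma poly_eq_from_values_and_high_coefs {R : idomainType} {rs : seq R}
    {p q : {poly R}} :
  uniq rs ->
  (forall x, x \in rs -> p.[x] = q.[x]) ->
  (forall j, (size rs <= j)%N -> p`_j = q`_j) ->
  p = q.
Proof.
move=> uniq_rs eq_values eq_high; apply/eqP; rewrite -subr_eq0; apply/eqP.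
apply: (roots_geq_poly_eq0 (rs := rs)) => //.
  by apply/allP => x /eq_values eq_x; rewrite /root hornerD hornerN eq_x subrr.
by apply/leq_sizeP => j /eq_high eq_j; rewrite coefB eq_j subrr.
Qed.

Lemma finite_decoder {A J : finType} {V : eqType} {C : Type} (c0 : C)
    {f : A -> J -> V} {h : A -> C} :
  (forall x y, f x =1 f y -> h x = h y) ->
  exists g : (J -> V) -> C, forall x, g (f x) = h x.
Proof.
move=> f_determines_h.
exists (fun t => if [pick x | [forall j, f x j == t j]] is Some x then h x
                 else c0).
move=> x; case: pickP => [y /forallP eq_yx | no_preimage].
  by apply: f_determines_h => j; apply/eqP.
by have := no_preimage x; rewrite (introT forallP) // => j.
Qed.

Lemma mgetE {F : fieldType} {m p} (A : 'M[F]_(m, p)) {i j}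
    (lt_im : (i < m)%N) (lt_jp : (j < p)%N) :
  mget A i j = A (Ordinal lt_im) (Ordinal lt_jp).
Proof. by rewrite /mget !insubT; congr (A _ _); apply: val_inj. Qed.

Section ShareMatrix.
Variables (F : fieldType) (k d : nat).
Hypotheses (le2k : (2 <= k)%N) (lekd : (k <= d)%N).

Notation secret := 'rV[F]_(d - k + 1).
Notation N := (@dealerN F k d).

Lemma secret_eq (s s' : secret) :
  (forall l, (l < d - k)%N -> sB s l = sB s' l) -> sA s = sA s' -> s = s'.
Proof.
move=> eq_sB eq_sA; apply/rowP => c.
have lt01 : (0 < 1)%N by [].
have -> : (0 : 'I_1) = Ordinal lt01 by apply: val_inj.
case: (ltnP c (d - k)) => [lt_c | ge_c].
  move: (eq_sB c lt_c); rewrite /sB !(mgetE _ lt01 (ltn_ord c)).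
  by have -> : Ordinal (ltn_ord c) = c by apply: val_inj.
have lt_last : (d - k < d - k + 1)%N by lia.
have -> : c = Ordinal lt_last by apply: val_inj => /=; have := ltn_ord c; lia.
by move: eq_sA; rewrite /sA !(mgetE _ lt01 lt_last).
Qed.

Lemma dealerN_entry s ra Rb Rc (i c : nat) :
  (i < d)%N -> (c < d - k + 1)%N ->
  mget (N s ra Rb Rc) i c =
  if i == 0%N then (if c == 0%N then sA s else sB s c.-1)
  else if (i < k)%N then (if c == 0%N then mget ra i.-1 0 else mget Rc c.-1 i.-1)
  else (if c == 0%N then sB s (i - k) else 0).
Proof.
move=> lt_id lt_c.
have lt_col : ((if c == 0%N then 0%N else (k + c - 1)%N) < d)%N.
  by case: eqP => _; lia.
rewrite (mgetE _ lt_id lt_c) mxE /= (mgetE _ lt_id lt_col) mxE /=.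
have [// | nz_c] := eqVneq c 0%N.
have -> : ((k + c - 1)%N == 0%N) = false by apply/eqP; lia.
have -> : ((k + c - 1)%N < k)%N = false by apply/negbTE; rewrite -leqNgt; lia.
by have -> : (k + c - 1 - k = c.-1)%N by lia.
Qed.

Lemma dealerN_row0 s ra Rb Rc (c : 'I_(d - k + 1)) :
  mget (N s ra Rb Rc) 0 c = if c == 0%N :> nat then sA s else sB s c.-1.
Proof. by rewrite dealerN_entry //; lia. Qed.

Lemma dealerN_high_row s ra Rb Rc (c : 'I_(d - k + 1)) i :
  (k <= i)%N -> (i < d)%N ->
  mget (N s ra Rb Rc) i c = if c == 0%N :> nat then sB s (i - k) else 0.
Proof.
move=> le_ki lt_id; rewrite dealerN_entry //.
have -> : (i == 0%N) = false by apply/eqP; lia.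
by have -> : (i < k)%N = false by apply/negbTE; rewrite -leqNgt.
Qed.

Definition colPoly s ra Rb Rc (c : nat) : {poly F} :=
  \poly_(i < d) mget (N s ra Rb Rc) i c.

Lemma share_colPoly (x : F) s ra Rb Rc (c : 'I_(d - k + 1)) :
  (@share F k d x s ra Rb Rc) 0 c = (colPoly s ra Rb Rc c).[x].
Proof.
rewrite /share /colPoly mxE horner_poly; apply: eq_bigr => j _.
rewrite mxE (mgetE _ (ltn_ord j) (ltn_ord c)) mulrC; congr (_ * _).
by congr (N _ _ _ _ _ _); apply: val_inj.
Qed.

Lemma colPoly_coef0 s ra Rb Rc (c : 'I_(d - k + 1)) :
  (colPoly s ra Rb Rc c)`_0 = if c == 0%N :> nat then sA s else sB s c.-1.
Proof.
by rewrite coef_poly -(dealerN_row0 s ra Rb Rc); have -> : (0 < d)%N by lia.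
Qed.

Variables (rs : seq F) (s s' : secret) (ra ra' : 'cV[F]_(k.-1))
  (Rb Rb' : 'M[F]_(k.-1)) (Rc Rc' : 'M[F]_(d - k, k.-1)).
Hypotheses (uniq_rs : uniq rs) (size_rs : size rs = k)
  (same_shares : forall x, x \in rs ->
     @share F k d x s ra Rb Rc = @share F k d x s' ra' Rb' Rc').

Lemma secret_entry_from_shares (c : 'I_(d - k + 1)) :
  (forall i, (k <= i)%N -> (i < d)%N ->
     mget (N s ra Rb Rc) i c = mget (N s' ra' Rb' Rc') i c) ->
  (if c == 0%N :> nat then sA s else sB s c.-1) =
  (if c == 0%N :> nat then sA s' else sB s' c.-1).
Proof.
move=> eq_high.
rewrite -(colPoly_coef0 s ra Rb Rc) -(colPoly_coef0 s' ra' Rb' Rc').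
suff -> : colPoly s ra Rb Rc c = colPoly s' ra' Rb' Rc' c by [].
apply: (poly_eq_from_values_and_high_coefs uniq_rs).
  by move=> x /same_shares eq_x; rewrite -!share_colPoly eq_x.
rewrite size_rs => j le_kj; rewrite !coef_poly.
by case: ifP => // lt_jd; apply: eq_high.
Qed.

Lemma shares_determine_secret : s = s'.
Proof.
have eq_sB l : (l < d - k)%N -> sB s l = sB s' l.
  move=> lt_l; have lt_c : (l.+1 < d - k + 1)%N by lia.
  apply: (secret_entry_from_shares (Ordinal lt_c)) => i le_ki lt_id.
  by rewrite !dealerN_high_row.
apply: secret_eq => //.
have lt_c : (0 < d - k + 1)%N by lia.
apply: (secret_entry_from_shares (Ordinal lt_c)) => i le_ki lt_id.
by rewrite !dealerN_high_row //= eq_sB //; lia.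
Qed.

End ShareMatrix.

(* Participant j : 'I_n is participant j+1, with evaluation point (j+1)%:R. *)
Theorem theorem2 (F : finFieldType) (n k d : nat)
  (Hk2 : (2 <= k)%N) (Hkn : (k <= n)%N) (Hkd : (k <= d)%N)
  (Hq : (n < #|F|)%N)
  (Hdist : injective (fun j : 'I_n => (j.+1)%:R : F))
  (I : {set 'I_n}) (HI : #|I| = k) :
  exists g : ({j : 'I_n | j \in I} -> 'rV[F]_(d - k + 1)) -> 'rV[F]_(d - k + 1),
    forall (s : 'rV[F]_(d - k + 1)) (ra : 'cV[F]_(k.-1))
           (Rb : 'M[F]_(k.-1)) (Rc : 'M[F]_(d - k, k.-1)),
      Rb^T = Rb ->
      g (fun j => @share F k d ((val j).+1%:R) s ra Rb Rc) = s.
Proof.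
pose Data := ('rV[F]_(d - k + 1) * 'cV[F]_(k.-1) * 'M[F]_(k.-1)
              * 'M[F]_(d - k, k.-1))%type.
pose shares (D : Data) (j : {j : 'I_n | j \in I}) :=
  @share F k d ((val j).+1%:R) D.1.1.1 D.1.1.2 D.1.2 D.2.
pose points := [seq ((val j).+1%:R : F) | j : {j : 'I_n | j \in I}].
have [g decode] : exists g, forall D : Data, g (shares D) = D.1.1.1.
  apply: (finite_decoder 0) => [[[[s ra] Rb] Rc]] [[[s' ra'] Rb'] Rc'] eq_sh.
  apply: (@shares_determine_secret F k d Hk2 Hkd points s s' ra ra' Rb Rb' Rc Rc').
  - by rewrite map_inj_uniq ?enum_uniq // => x y /Hdist; apply: val_inj.
  - by rewrite size_map -cardE card_sig.
  - by move=> x /mapP [j _ ->]; apply: eq_sh.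
by exists g => s ra Rb Rc _; apply: (decode (s, ra, Rb, Rc)).
Qed.
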